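(* Let $K>1$ and let $n_1,\dots,n_K$ be positive integers. Then \[ \mathbb{E}[\tau(n_1,\dots,n_K)] \;\le\; K\cdot \min_c n_c . \]
   Context: Initial stocks $\vec n^{(0)}=(n_1,\dots,n_K)$ of $K$ goodie types evolve as follows: at each step $t=1,2,\dots$, as long as at least two coordinates of $\vec n^{(t-1)}$ are nonzero, an index $i$ is chosen uniformly at random (independently of the past) among the indices with $n_i^{(t-1)}>0$, and $\vec n^{(t)}=\vec n^{(t-1)}-\vec e_i$ ($\vec e_i$ the $i$-th standard unit vector). The time of the first emptying event is $\tau(n_1,\dots,n_K)=\min\{t : \exists i \text{ with } n_i^{(t)}=0 \text{ and } n_i^{(0)}>0\}$. *)

From mathcomp Require Import all_boot all_order all_algebra.
Set Implicit Arguments. Unset Strict Implicit. Unset Printing Implicit Defensive.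
Import Order.TTheory GRing.Theory Num.Theory.

Definition dec K (n : 'I_K -> nat) (i : 'I_K) : 'I_K -> nat :=
  fun j => if j == i then (n j).-1 else n j.

Definition nnz K (n : 'I_K -> nat) : nat := #|[pred j | 0 < n j]|.

Definition run K (n : 'I_K -> nat) (s : seq 'I_K) : 'I_K -> nat :=
  foldl (@dec K) n s.

(* probability that the first |s| choices of the process started at n
   are exactly s: while at least two coordinates are nonzero, an index is
   chosen uniformly among the nonzero ones; otherwise the process stops
   (no further step, probability 0 of any further choice). *)
Fixpoint pathprob K (n : 'I_K -> nat) (s : seq 'I_K) : rat :=
  match s with
  | [::] => 1
  | i :: s' =>
      (if ((1 < nnz n) && (0 < n i))%N then ((nnz n)%:R)^-1 else 0)%R
      * pathprob (dec n i) s'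
  end.

Definition emptied K (n0 m : 'I_K -> nat) : bool :=
  [exists i, (0 < n0 i) && (m i == 0)].

Definition tau_is K (n0 : 'I_K -> nat) (s : seq 'I_K) (t : nat) : bool :=
  (size s == t) && emptied n0 (run n0 s)
  && [forall k : 'I_t, ~~ emptied n0 (run n0 (take k s))].

(* E[tau(n0)] = sum_t t * P(tau = t).  Each step lowers the total stock by
   one, so tau <= \sum_i n0 i and the sum over t can stop there. *)
Definition Etau K (n0 : 'I_K -> nat) : rat :=
  (\sum_(t < (\sum_(i < K) n0 i).+1)
     (t%:R * \sum_(s : t.-tuple 'I_K) pathprob n0 s * (tau_is n0 s t)%:R))%R.

From mathcomp Require Import all_boot all_order all_algebra.
Import Order.TTheory GRing.Theory Num.Theory.
From mathcomp Require Import zify.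

Set Implicit Arguments.
Unset Strict Implicit.
Unset Printing Implicit Defensive.

(* As long as no stock is empty, all K coordinates are positive, so each step
   picks a type uniformly among all K.  Hence the expected emptying time from
   a state m satisfies  E(m) = 1 + 1/K \sum_i E(m - e_i),  and the potential
   K m_c satisfies the same relation with equality, because
   \sum_i (m - e_i)_c = K m_c - 1.  Induction on the horizon of the truncated
   expectation turns this into  E(m) <= K m_c. *)

Lemma forall_ordS t (P : nat -> bool) :
  [forall k : 'I_t.+1, P k] = P 0 && [forall k : 'I_t, P k.+1].
Proof.
apply/forallP/andP => [H | [P0 /forallP H] [[|k] lt_k]] //.
by split; [exact: (H ord0) | apply/forallP => k; exact: (H (lift ord0 k))].
exact: (H (Ordinal (lt_k : (k < t)%N))).
Qed.

Lemma big_tupleS (T : finType) t (R : nmodType) (f : seq T -> R) :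
  (\sum_(s : t.+1.-tuple T) f s = \sum_(i : T) \sum_(s : t.-tuple T) f (i :: s))%R.
Proof.
rewrite pair_big (reindex (fun p : T * t.-tuple T => [tuple of p.1 :: p.2])) //.
exists (fun s : t.+1.-tuple T => (thead s, [tuple of behead s])).
  by move=> [i s] _; congr pair; apply: val_inj.
by move=> s _; rewrite /= [in RHS](tuple_eta s).
Qed.

Lemma sum_dec_at K (m : 'I_K -> nat) c :
  0 < m c -> (\sum_(i < K) dec m i c).+1 = K * m c.
Proof.
move=> mc_gt0; rewrite (bigD1 c) //= {1}/dec eqxx.
rewrite (eq_bigr (fun _ => m c)) => [|i ic]; last by rewrite /dec eq_sym (negbTE ic).
by rewrite sum_nat_const cardC1 card_ord; have := ltn_ord c; nia.
Qed.

Section EmptyingTime.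

Variable K : nat.
Hypothesis K_gt1 : 1 < K.
Variable n0 : 'I_K -> nat.
Hypothesis n0_pos : forall i, 0 < n0 i.

Local Open Scope ring_scope.

Definition tau_from (m : 'I_K -> nat) (s : seq 'I_K) (t : nat) : bool :=
  (size s == t) && emptied n0 (run m s)
  && [forall k : 'I_t, ~~ emptied n0 (run m (take k s))].

Definition ptau m t : rat :=
  \sum_(s : t.-tuple 'I_K) pathprob m s * (tau_from m s t)%:R.

Definition ptau_lt m T : rat := \sum_(t < T) ptau m t.

Definition Etau_lt m T : rat := \sum_(t < T) t%:R * ptau m t.

Lemma alive_pos m i : ~~ emptied n0 m -> (0 < m i)%N.
Proof. by move/existsPn/(_ i); rewrite n0_pos lt0n. Qed.

Lemma nnz_alive m : ~~ emptied n0 m -> nnz m = K.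
Proof.
move=> alive; rewrite /nnz -[RHS]card_ord; apply: eq_card => j.
by rewrite inE alive_pos.
Qed.

Lemma tau_from_cons m i s t : ~~ emptied n0 m ->
  tau_from m (i :: s) t.+1 = tau_from (dec m i) s t.
Proof.
move=> alive; rewrite /tau_from.
by rewrite (forall_ordS _ (fun k => ~~ emptied n0 (run m (take k (i :: s))))) /= alive.
Qed.

Lemma ptau0_alive m : ~~ emptied n0 m -> ptau m 0 = 0.
Proof.
move=> alive; apply: big1 => s _.
by rewrite (tuple0 s) /tau_from /= (negbTE alive) mulr0.
Qed.

Lemma ptau0_emptied m : emptied n0 m -> ptau m 0 = 1.
Proof.
move=> empt; rewrite /ptau.
rewrite (big_pred1 [tuple]) => [|s]; last by rewrite (tuple0 s) !inE eqxx.
have -> : tau_from m [tuple] 0 by rewrite /tau_from /= empt; apply/forallP => -[].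
by rewrite mul1r.
Qed.

Lemma ptauS_emptied m t : emptied n0 m -> ptau m t.+1 = 0.
Proof.
move=> empt; apply: big1 => s _; rewrite /tau_from.
by rewrite (forall_ordS _ (fun k => ~~ emptied n0 (run m (take k s)))) take0 /= empt !andbF mulr0.
Qed.

Lemma ptauS_alive m t : ~~ emptied n0 m ->
  ptau m t.+1 = K%:R^-1 * \sum_i ptau (dec m i) t.
Proof.
move=> alive; rewrite /ptau.
rewrite (@big_tupleS _ t _ (fun s => pathprob m s * (tau_from m s t.+1)%:R)) mulr_sumr.
apply: eq_bigr => i _; rewrite mulr_sumr; apply: eq_bigr => s _.
by rewrite /= nnz_alive // K_gt1 alive_pos // tau_from_cons // mulrA.
Qed.

Lemma ptau_ltS_emptied m T : emptied n0 m -> ptau_lt m T.+1 = 1.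
Proof.
move=> empt; rewrite /ptau_lt big_ord_recl ptau0_emptied // big1 ?addr0 // => t _.
exact: ptauS_emptied.
Qed.

Lemma ptau_ltS_alive m T : ~~ emptied n0 m ->
  ptau_lt m T.+1 = K%:R^-1 * \sum_i ptau_lt (dec m i) T.
Proof.
move=> alive; rewrite /ptau_lt big_ord_recl ptau0_alive // add0r.
under eq_bigr => t _ do rewrite ptauS_alive //.
by rewrite -mulr_sumr exchange_big.
Qed.

Lemma Etau_lt_emptied m T : emptied n0 m -> Etau_lt m T = 0.
Proof.
move=> empt; apply: big1 => -[[|t] ?] _; first by rewrite mul0r.
by rewrite ptauS_emptied // mulr0.
Qed.

Lemma Etau_ltS_alive m T : ~~ emptied n0 m ->
  Etau_lt m T.+1 = K%:R^-1 * \sum_i (Etau_lt (dec m i) T + ptau_lt (dec m i) T).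
Proof.
move=> alive; rewrite /Etau_lt big_ord_recl mul0r add0r.
under eq_bigr => t _ do rewrite ptauS_alive // mulrCA mulr_sumr.
rewrite -mulr_sumr exchange_big; congr (_ * _); apply: eq_bigr => i _.
rewrite -big_split; apply: eq_bigr => t _.
by rewrite lift0 -addn1 natrD mulrDl mul1r.
Qed.

Lemma K_neq0 : K%:R != 0 :> rat.
Proof. by rewrite pnatr_eq0 -lt0n ltnW. Qed.

Lemma ptau_lt_le1 T m : ptau_lt m T <= 1.
Proof.
elim: T m => [|T IH] m; first by rewrite /ptau_lt big_ord0 ler01.
have [empt | alive] := boolP (emptied n0 m); first by rewrite ptau_ltS_emptied.
rewrite ptau_ltS_alive // -[leRHS](mulVf K_neq0).
rewrite ler_wpM2l ?invr_ge0 ?ler0n // -[X in _ <= X%:R]card_ord -sumr_const.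
by apply: ler_sum => i _; exact: IH.
Qed.

Lemma Etau_lt_le c T m : Etau_lt m T <= K%:R * (m c)%:R.
Proof.
elim: T m => [|T IH] m; first by rewrite /Etau_lt big_ord0 mulr_ge0 ?ler0n.
have [empt | alive] := boolP (emptied n0 m).
  by rewrite Etau_lt_emptied // mulr_ge0 ?ler0n.
rewrite Etau_ltS_alive //.
have potential :
    K%:R^-1 * \sum_(i < K) (K%:R * (dec m i c)%:R + 1) = K%:R * (m c)%:R :> rat.
  rewrite big_split /= -mulr_sumr sumr_const card_ord -[X in _ + X]mulr1 -mulrDr.
  by rewrite mulKf ?K_neq0 // -natr_sum natr1 sum_dec_at ?alive_pos // natrM.
rewrite -potential ler_wpM2l ?invr_ge0 ?ler0n //.
by apply: ler_sum => i _; apply: lerD; [exact: IH | exact: ptau_lt_le1].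
Qed.

End EmptyingTime.

Theorem lemma2 (K : nat) (hK : 1 < K) (n : 'I_K -> nat)
  (hpos : forall i, 0 < n i) :
  forall c : 'I_K, (Etau n <= K%:R * (n c)%:R)%R.
Proof.
(* [Etau n] unfolds to [Etau_lt n n (\sum_i n i).+1]. *)
by move=> c; apply: Etau_lt_le.
Qed.
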